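(* Let $X$ be a compact metric space with metric $d$, let $f\colon X\to X$ be a continuous map with the s-limit shadowing property, let $C\in\mathcal{C}(f)$ and $D\in\mathcal{D}(C)$, and let $\mathcal{F},\mathcal{G}$ be full Furstenberg families. Let $n\ge2$ and $\delta>0$. If there is an $(\mathcal{F},\mathcal{G})$-$\delta$-scrambled $n$-tuple $(a_1,\dots,a_n)\in[V^s(D)]^n$ for $f$, then for every $0<r<\delta$, $V^s(D)$ is dense $(\mathcal{F},\mathcal{G})$-$n$-$r$-chaotic for $f$.
   Context: A $\delta$-chain of $f$ ($\delta>0$) is a finite sequence $(x_i)_{i=0}^k$, $k\ge1$, with $d(f(x_i),x_{i+1})\le\delta$ for $0\le i\le k-1$; it is a $\delta$-cycle if $x_0=x_k$, with length $k$. Write $x\to y$ if for every $\delta>0$ there is a $\delta$-chain from $x$ to $y$. Let $CR(f)=\{x\colon x\to x\}$; on $CR(f)$ let $x\leftrightarrow y$ iff $x\to y$ and $y\to x$; its classes are the chain components, forming $\mathcal{C}(f)$. For $C\in\mathcal{C}(f)$, $\delta>0$, let $m=m(C,\delta)$ be the gcd of the lengths of all $\delta$-cycles of $f|_C$, and for $x,y\in C$ let $x\sim_{C,\delta}y$ iff there is a $\delta$-chain of $f|_C$ from $x$ to $y$ of length divisible by $m$; $\mathcal{D}(C,\delta)$ is the set of its equivalence classes. Let $x\sim_C y$ iff $x\sim_{C,\delta}y$ for all $\delta>0$; $\mathcal{D}(C)$ is its set of classes. For $D\in\mathcal{D}(C)$, $D_\delta$ is the element of $\mathcal{D}(C,\delta)$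 containing $D$. $W^s(C)=\{x\colon\lim_i d(f^i(x),C)=0\}$ and $V^s(D)=\bigcap_{\delta>0}\{x\in W^s(C)\colon\lim_i d(f^i(x),f^i(D_\delta))=0\}$. $f$ has the s-limit shadowing property if for every $\epsilon>0$ there is $\delta>0$ such that for every sequence $(x_i)_{i\ge0}$ with $d(f(x_i),x_{i+1})\le\delta$ for all $i$ and $d(f(x_i),x_{i+1})\to0$ there is $x\in X$ with $d(f^i(x),x_i)\le\epsilon$ for all $i$ and $d(f^i(x),x_i)\to0$. A Furstenberg family is a nonempty proper family $\mathcal{F}\subsetneq 2^{\mathbb{N}_0}$ closed under taking supersets; it is full if $\{i\in A\colon i\ge n\}\in\mathcal{F}$ for all $A\in\mathcal{F}$, $n\ge0$. For $x_1,\dots,x_n\in X$, $r>0$: $S_f(x_1,\dots,x_n;r)=\{i\in\mathbb{N}_0\colon\min_{j<k}d(f^i(x_j),f^i(x_k))>r\}$ and $T_f(x_1,\dots,x_n;r)=\{i\in\mathbb{N}_0\colon\max_{j<k}d(f^i(x_j),f^i(x_k))<r\}$. $(x_1,\dots,x_n)$ is $(\mathcal{F},\mathcal{G})$-$\delta$-scrambled for $f$ if $S_f(x_1,\dots,x_n;\delta)\in\mathcal{F}$ and $T_f(x_1,\dots,x_n;\epsilon)\in\mathcal{G}$ for all $\epsilon>0$. A nonempty $Y\subset X$ is dense $(\mathcal{F},\mathcal{G})$-$n$-$\delta$-chaotic for $f$ if the set of $(\mathcal{F},\mathcal{G})$-$\delta$-scrambled $n$-tuples in $Y^n$ is dense in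 $Y^n$. *)

From Stdlib Require Import Reals Lra Lia List.
Open Scope R_scope.

Section Defs.
Context {X : Type} (d : X -> X -> R).

Definition is_metric : Prop :=
  (forall x y, 0 <= d x y) /\ (forall x y, d x y = 0 <-> x = y) /\
  (forall x y, d x y = d y x) /\ (forall x y z, d x z <= d x y + d y z).

Definition open_set (U : X -> Prop) : Prop :=
  forall x, U x -> exists e, 0 < e /\ forall y, d x y < e -> U y.

Definition compact_space : Prop :=
  forall (I : Type) (U : I -> X -> Prop),
    (forall i, open_set (U i)) -> (forall x, exists i, U i x) ->
    exists l : list I, forall x, exists i, In i l /\ U i x.

Definition continuous_map (f : X -> X) : Prop :=
  forall x e, 0 < e -> exists r, 0 < r /\ forall y, d x y < r -> d (f x) (f y) < e.

Variable f : X -> X.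

Definition iter (i : nat) (x : X) : X := Nat.iter i f x.

Definition chain_in (A : X -> Prop) (delta : R) (x : nat -> X) (k : nat) : Prop :=
  (1 <= k)%nat /\ (forall i, (i <= k)%nat -> A (x i)) /\
  (forall i, (i < k)%nat -> d (f (x i)) (x (S i)) <= delta).

Definition allX : X -> Prop := fun _ => True.

Definition chain_rel (a b : X) : Prop :=
  forall delta, 0 < delta -> exists x k, chain_in allX delta x k /\ x O = a /\ x k = b.

Definition CR (x : X) : Prop := chain_rel x x.

Definition chain_equiv (x y : X) : Prop := CR x /\ CR y /\ chain_rel x y /\ chain_rel y x.

(* C is an element of C(f): an equivalence class of <-> on CR(f) *)
Definition chain_component (C : X -> Prop) : Prop :=
  exists x0, CR x0 /\ forall y, C y <-> chain_equiv x0 y.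

Definition cycle_length (C : X -> Prop) (delta : R) (k : nat) : Prop :=
  exists x, chain_in C delta x k /\ x O = x k.

Definition is_gcd_set (S : nat -> Prop) (m : nat) : Prop :=
  (forall k, S k -> Nat.divide m k) /\
  (forall m', (forall k, S k -> Nat.divide m' k) -> Nat.divide m' m).

Definition sim_Cd (C : X -> Prop) (delta : R) (x y : X) : Prop :=
  exists m, is_gcd_set (cycle_length C delta) m /\
  exists z k, chain_in C delta z k /\ z O = x /\ z k = y /\ Nat.divide m k.

Definition sim_C (C : X -> Prop) (x y : X) : Prop :=
  forall delta, 0 < delta -> sim_Cd C delta x y.

(* D is an element of D(C): an equivalence class of ~_C on C *)
Definition D_class (C D : X -> Prop) : Prop :=
  exists x0, C x0 /\ forall y, D y <-> (C y /\ sim_C C x0 y).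

Definition D_delta (C D : X -> Prop) (delta : R) (y : X) : Prop :=
  C y /\ exists x0, D x0 /\ sim_Cd C delta x0 y.

(* lim_i d(f^i(x), A_i) = 0, with d(p,A) = inf_{a in A} d(p,a) *)
Definition dist_to_seq_sets_zero (x : X) (A : nat -> X -> Prop) : Prop :=
  forall e, 0 < e -> exists N, forall i, (N <= i)%nat ->
    exists y, A i y /\ d (iter i x) y < e.

Definition Ws (C : X -> Prop) (x : X) : Prop :=
  dist_to_seq_sets_zero x (fun _ => C).

Definition image_iter (i : nat) (A : X -> Prop) (y : X) : Prop :=
  exists a, A a /\ y = iter i a.

Definition Vs (C D : X -> Prop) (x : X) : Prop :=
  forall delta, 0 < delta ->
    Ws C x /\ dist_to_seq_sets_zero x (fun i => image_iter i (D_delta C D delta)).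

Definition s_limit_shadowing : Prop :=
  forall eps, 0 < eps -> exists delta, 0 < delta /\
    forall xs : nat -> X,
      (forall i, d (f (xs i)) (xs (S i)) <= delta) ->
      (forall e, 0 < e -> exists N, forall i, (N <= i)%nat -> d (f (xs i)) (xs (S i)) < e) ->
      exists x, (forall i, d (iter i x) (xs i) <= eps) /\
        (forall e, 0 < e -> exists N, forall i, (N <= i)%nat -> d (iter i x) (xs i) < e).

Definition S_set (n : nat) (x : nat -> X) (r : R) (i : nat) : Prop :=
  forall j k, (j < k)%nat -> (k < n)%nat -> d (iter i (x j)) (iter i (x k)) > r.

Definition T_set (n : nat) (x : nat -> X) (r : R) (i : nat) : Prop :=
  forall j k, (j < k)%nat -> (k < n)%nat -> d (iter i (x j)) (iter i (x k)) < r.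

Definition scrambled (F G : (nat -> Prop) -> Prop) (n : nat) (delta : R) (x : nat -> X) : Prop :=
  F (S_set n x delta) /\ forall e, 0 < e -> G (T_set n x e).

Definition dense_chaotic (F G : (nat -> Prop) -> Prop) (n : nat) (delta : R) (Y : X -> Prop) : Prop :=
  (exists y, Y y) /\
  forall (y : nat -> X) e, (forall j, (j < n)%nat -> Y (y j)) -> 0 < e ->
    exists z, (forall j, (j < n)%nat -> Y (z j)) /\ scrambled F G n delta z /\
      (forall j, (j < n)%nat -> d (z j) (y j) < e).

End Defs.

Definition furstenberg (F : (nat -> Prop) -> Prop) : Prop :=
  (exists A, F A) /\ (exists A, ~ F A) /\
  (forall A B : nat -> Prop, F A -> (forall i, A i -> B i) -> F B).

Definition full_family (F : (nat -> Prop) -> Prop) : Prop :=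
  furstenberg F /\ forall A n, F A -> F (fun i => A i /\ (n <= i)%nat).

From Pilot Require Import Defs.
From Stdlib Require Import Reals Lra Lia Arith List.
From Stdlib Require Import IndefiniteDescription Classical.
Open Scope R_scope.

(* Given targets [y_j] in [Vs D], it suffices to find [z_j] in [Vs D] close to [y_j]
   and asymptotic to [a_j]: asymptotic points stay in [Vs D], and since [F] and [G] are
   full, the tuple [z] is [r]-scrambled for every [r < delta].  Such a [z_j] shadows a
   pseudo-orbit that follows [y_j], jumps near the orbit of a point of [D_delta], travels
   inside [C] along a chain, and lands on the orbit of a point of [D_delta] that tracks
   [a_j].  The chain must have exactly prescribed length.  By compactness [f] is chain
   transitive on [C] with uniformly bounded chain lengths, and the lengths of the cycles at
   a point of [C] form an additive semigroup of gcd [m(C, delta)], hence contain every large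
   multiple of [m]; the membership of both endpoints in [D_delta] supplies the congruence. *)

Section AdditiveSemigroup.
Variable A : nat -> Prop.
Hypothesis A_add : forall a b, A a -> A b -> A (a + b).
Hypothesis A_pos : forall k, A k -> (0 < k)%nat.
Variable m : nat.
Hypothesis A_gcd : is_gcd_set A m.

Let A0 k := k = O \/ A k.

Let A_mul c k : (1 <= c)%nat -> A k -> A (c * k).
Proof.
  intros Hc Hk. induction c as [|[|c] IH]; [lia|now rewrite Nat.mul_1_l|].
  replace (S (S c) * k)%nat with (k + S c * k)%nat by lia.
  apply A_add; [exact Hk|apply IH; lia].
Qed.

Let A0_add a b : A0 a -> A0 b -> A0 (a + b).
Proof.
  intros [->|Ha] [->|Hb]; [left|right..]; auto.
  now rewrite Nat.add_0_r.
Qed.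

Let A0_mul c k : A0 k -> A0 (c * k).
Proof.
  intros [->|Hk]; [left; lia|]. destruct c as [|c]; [now left|].
  right. apply A_mul; [lia|exact Hk].
Qed.

Let gap_reduces_to_gcd g : (0 < g)%nat -> Nat.divide m g ->
  (exists P Q, A0 P /\ A0 Q /\ P = (Q + g)%nat) ->
  exists P Q, A0 P /\ A0 Q /\ P = (Q + m)%nat.
Proof.
  induction g as [g IH] using (well_founded_induction lt_wf).
  intros Hg Hmg [P [Q [AP [AQ E]]]].
  destruct (classic (forall k, A k -> Nat.divide g k)) as [Hall|Hnot].
  - assert (g = m) as -> by (apply Nat.divide_antisym; [apply A_gcd, Hall|exact Hmg]).
    eauto.
  - apply not_all_ex_not in Hnot as [k Hk]. apply imply_to_and in Hk as [Ak Ndk].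
    (* Bezout: [a * g = b * k + gcd g k], so [a P] and [a Q + b k] are [gcd g k] apart. *)
    destruct (Nat.gcd_bezout_pos g k Hg) as [a [b Hab]].
    assert (Hle : (Nat.gcd g k <= g)%nat) by (apply Nat.divide_pos_le, Nat.gcd_divide_l; exact Hg).
    assert (Hne : Nat.gcd g k <> g) by (intros Heq; apply Ndk; rewrite <- Heq; apply Nat.gcd_divide_r).
    assert (Hpos : (0 < Nat.gcd g k)%nat)
      by (destruct (Nat.eq_dec (Nat.gcd g k) 0) as [H0|]; [apply Nat.gcd_eq_0_l in H0|]; lia).
    apply (IH (Nat.gcd g k)); [lia|exact Hpos|apply Nat.gcd_greatest; [exact Hmg|apply A_gcd, Ak]|].
    exists (a * P)%nat, (a * Q + b * k)%nat.
    split; [apply A0_mul, AP|split; [apply A0_add; apply A0_mul; [exact AQ|right; exact Ak]|]].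
    subst P. rewrite Nat.mul_add_distr_l, Hab. lia.
Qed.

Lemma additive_set_contains_large_multiples :
  (exists s, A s) -> exists T0, forall T, (T0 <= T)%nat -> Nat.divide m T -> A T.
Proof.
  intros [s As].
  assert (Hm0 : (0 < m)%nat).
  { destruct (proj1 A_gcd s As) as [t Ht]. specialize (A_pos s As). nia. }
  destruct (gap_reduces_to_gcd s (A_pos s As) (proj1 A_gcd s As)) as [P [Q [AP [[->|AQ] E]]]].
  { exists s, 0%nat. split; [now right|split; [now left|lia]]. }
  - assert (AP' : A P) by (destruct AP; [lia|assumption]).
    exists m. intros T HT [t ->]. subst P. apply A_mul; [nia|exact AP'].
  - assert (AP' : A P) by (destruct AP; [lia|assumption]).
    destruct (proj1 A_gcd Q AQ) as [q Hq].
    assert (Hq1 : (1 <= q)%nat) by (specialize (A_pos Q AQ); nia).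
    (* Writing [t = q a + b] with [b < q <= a]: [t m = (a - b) Q + b P]. *)
    exists (q * q * m)%nat. intros T HT [t ->].
    assert (Eab : t = (q * (t / q) + t mod q)%nat) by (apply Nat.div_mod; lia).
    assert (Hb : (t mod q < q)%nat) by (apply Nat.mod_upper_bound; lia).
    assert (Hab : (t mod q < t / q)%nat) by nia.
    replace (t * m)%nat with ((t / q - t mod q) * Q + t mod q * P)%nat
      by (rewrite E, Hq; nia).
    destruct (A0_mul (t mod q) P AP) as [H0|H0].
    + rewrite H0, Nat.add_0_r. apply A_mul; [lia|exact AQ].
    + apply A_add; [apply A_mul; [lia|exact AQ]|exact H0].
Qed.

End AdditiveSemigroup.

Lemma is_gcd_set_unique (A : nat -> Prop) m1 m2 :
  is_gcd_set A m1 -> is_gcd_set A m2 -> m1 = m2.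
Proof.
  intros [A1 B1] [A2 B2]. apply Nat.divide_antisym; [apply B2, A1|apply B1, A2].
Qed.

Section Dynamics.
Context {X : Type} (d : X -> X -> R) (f : X -> X).
Hypothesis Hm : is_metric d.

Lemma dist_ge0 x y : 0 <= d x y.
Proof. apply Hm. Qed.

Lemma dist_refl x : d x x = 0.
Proof. apply Hm. reflexivity. Qed.

Lemma dist_sym x y : d x y = d y x.
Proof. apply Hm. Qed.

Lemma dist_triangle x y z : d x z <= d x y + d y z.
Proof. apply Hm. Qed.

Lemma iter_succ i x : iter f (S i) x = f (iter f i x).
Proof. reflexivity. Qed.

Definition chain_from_to (A : X -> Prop) (e : R) (a b : X) (k : nat) : Prop :=
  exists z, chain_in d f A e z k /\ z O = a /\ z k = b.

Lemma chain_from_to_len A e a b k : chain_from_to A e a b k -> (1 <= k)%nat.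
Proof. intros [z [Hz _]]. apply Hz. Qed.

Lemma chain_from_to_mono A A' e e' a b k : (forall x, A x -> A' x) -> e <= e' ->
  chain_from_to A e a b k -> chain_from_to A' e' a b k.
Proof.
  intros HA He [z [[Hk [Hz Sz]] Ez]]. exists z. split; [|exact Ez].
  split; [exact Hk|split]; [intros i Hi; apply HA, Hz, Hi|].
  intros i Hi. specialize (Sz i Hi). lra.
Qed.

Lemma chain_from_to_trans A e a b c k l :
  chain_from_to A e a b k -> chain_from_to A e b c l -> chain_from_to A e a c (k + l).
Proof.
  intros [z [[Hk [Hz Sz]] [Z0 Zk]]] [y [[Hl [Hy Sy]] [Y0 Yl]]].
  exists (fun i => if Nat.leb i k then z i else y (i - k)%nat).
  split; [split; [lia|split]|split].
  - intros i Hi. destruct (Nat.leb_spec i k); [apply Hz|apply Hy]; lia.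
  - intros i Hi. destruct (Nat.leb_spec i k), (Nat.leb_spec (S i) k); try lia.
    + apply Sz; lia.
    + replace i with k by lia. replace (S k - k)%nat with 1%nat by lia.
      rewrite Zk, <- Y0. apply Sy; lia.
    + replace (S i - k)%nat with (S (i - k)) by lia. apply Sy; lia.
  - exact Z0.
  - destruct (Nat.leb_spec (k + l) k); [lia|]. rewrite <- Yl. f_equal; lia.
Qed.

Lemma chain_from_to_orbit A e a k : (1 <= k)%nat -> 0 <= e ->
  (forall i, (i <= k)%nat -> A (iter f i a)) -> chain_from_to A e a (iter f k a) k.
Proof.
  intros Hk He HA. exists (fun i => iter f i a). split; [|split; reflexivity].
  split; [exact Hk|split; [exact HA|]].
  intros i _. rewrite iter_succ, dist_refl. exact He.
Qed.

Lemma chain_in_prefix A e z k i : chain_in d f A e z k -> (1 <= i <= k)%nat ->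
  chain_from_to A e (z O) (z i) i.
Proof.
  intros [Hk [Hz Sz]] Hi. exists z. split; [|split; reflexivity].
  split; [lia|split]; intros j Hj; [apply Hz|apply Sz]; lia.
Qed.

Lemma chain_in_suffix A e z k i : chain_in d f A e z k -> (i < k)%nat ->
  chain_from_to A e (z i) (z k) (k - i).
Proof.
  intros [Hk [Hz Sz]] Hi. exists (fun t => z (i + t)%nat).
  split; [split; [lia|split]|split; f_equal; lia].
  - intros j Hj. apply Hz. lia.
  - intros j Hj. replace (i + S j)%nat with (S (i + j)) by lia. apply Sz. lia.
Qed.

Lemma chain_from_to_move_end A e eta a b b' k : chain_from_to A e a b k -> A b' ->
  d b b' <= eta -> chain_from_to A (e + eta) a b' k.
Proof.
  intros [z [[Hk [Hz Sz]] [Z0 Zk]]] Hb' Hbb.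
  exists (fun i => if Nat.eqb i k then b' else z i).
  split; [split; [exact Hk|split]|split].
  - intros i Hi. destruct (Nat.eqb_spec i k); [exact Hb'|apply Hz, Hi].
  - intros i Hi. destruct (Nat.eqb_spec i k); [lia|]. specialize (Sz i Hi).
    pose proof (dist_ge0 b b').
    destruct (Nat.eqb_spec (S i) k) as [Ei|]; [|lra].
    rewrite Ei, Zk in Sz. pose proof (dist_triangle (f (z i)) b b'). lra.
  - destruct (Nat.eqb_spec 0 k); [lia|exact Z0].
  - now rewrite Nat.eqb_refl.
Qed.

Lemma chain_from_to_move_start A e eta a a' b k : chain_from_to A e a b k -> A a' ->
  d (f a') (f a) <= eta -> chain_from_to A (e + eta) a' b k.
Proof.
  intros [z [[Hk [Hz Sz]] [Z0 Zk]]] Ha' Haa.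
  exists (fun i => if Nat.eqb i 0 then a' else z i).
  split; [split; [exact Hk|split]|split].
  - intros i Hi. destruct (Nat.eqb_spec i 0); [exact Ha'|apply Hz, Hi].
  - intros i Hi. specialize (Sz i Hi). pose proof (dist_ge0 (f a') (f a)).
    simpl. destruct (Nat.eqb_spec i 0) as [->|]; [|lra].
    rewrite Z0 in Sz. pose proof (dist_triangle (f a') (f a) (z 1%nat)). lra.
  - reflexivity.
  - destruct (Nat.eqb_spec k 0); [lia|exact Zk].
Qed.

Lemma chain_in_perturb A A' e eta z z' k : chain_in d f A e z k ->
  (forall i, (i <= k)%nat ->
     A' (z' i) /\ d (z' i) (z i) <= eta /\ d (f (z' i)) (f (z i)) <= eta) ->
  chain_in d f A' (e + 2 * eta) z' k.
Proof.
  intros [Hk [_ Sz]] Hz'. split; [exact Hk|split]; [intros i Hi; apply Hz', Hi|].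
  intros i Hi. destruct (Hz' i ltac:(lia)) as [_ [_ Hf]].
  destruct (Hz' (S i) Hi) as [_ [Hn _]]. rewrite dist_sym in Hn. specialize (Sz i Hi).
  pose proof (dist_triangle (f (z' i)) (f (z i)) (z' (S i))).
  pose proof (dist_triangle (f (z i)) (z (S i)) (z' (S i))). lra.
Qed.

Lemma chain_rel_iff a b :
  chain_rel d f a b <-> forall e, 0 < e -> exists k, chain_from_to allX e a b k.
Proof.
  split; intros H e He.
  - destruct (H e He) as [z [k Hz]]. exists k, z. exact Hz.
  - destruct (H e He) as [k [z Hz]]. exists z, k. exact Hz.
Qed.

Lemma chain_rel_trans a b c : chain_rel d f a b -> chain_rel d f b c -> chain_rel d f a c.
Proof.
  rewrite !chain_rel_iff. intros H1 H2 e He.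
  destruct (H1 e He) as [k Hk], (H2 e He) as [l Hl].
  exists (k + l)%nat. exact (chain_from_to_trans _ _ _ _ _ _ _ Hk Hl).
Qed.

Lemma chain_rel_f a : chain_rel d f a (f a).
Proof.
  apply chain_rel_iff. intros e He. exists 1%nat.
  apply chain_from_to_orbit; [lia|lra|intros; exact I].
Qed.

Definition asymptotic (x y : X) : Prop :=
  forall eta, 0 < eta -> exists N, forall i, (N <= i)%nat -> d (iter f i x) (iter f i y) < eta.

Lemma dist_to_seq_sets_zero_asymptotic x z A : dist_to_seq_sets_zero d f x A ->
  asymptotic z x -> dist_to_seq_sets_zero d f z A.
Proof.
  intros Hx Hzx e He. destruct (Hx (e/2) ltac:(lra)) as [N1 HN1].
  destruct (Hzx (e/2) ltac:(lra)) as [N2 HN2]. exists (Nat.max N1 N2). intros i Hi.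
  destruct (HN1 i ltac:(lia)) as [y [Ay Hy]]. exists y. split; [exact Ay|].
  specialize (HN2 i ltac:(lia)). pose proof (dist_triangle (iter f i z) (iter f i x) y). lra.
Qed.

Lemma Vs_asymptotic C D x z : Vs d f C D x -> asymptotic z x -> Vs d f C D z.
Proof.
  intros Hx Hzx dl Hdl. destruct (Hx dl Hdl) as [H1 H2].
  split; eapply dist_to_seq_sets_zero_asymptotic; eassumption.
Qed.

Lemma asymptotic_uniform (z a : nat -> X) n :
  (forall j, (j < n)%nat -> asymptotic (z j) (a j)) ->
  forall eta, 0 < eta -> exists N, forall j i, (j < n)%nat -> (N <= i)%nat ->
    d (iter f i (z j)) (iter f i (a j)) < eta.
Proof.
  intros H eta Heta. induction n as [|n IH].
  - exists 0%nat. intros; lia.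
  - destruct IH as [N1 HN1]; [intros; apply H; lia|].
    destruct (H n ltac:(lia) eta Heta) as [N2 HN2].
    exists (Nat.max N1 N2). intros j i Hj Hi.
    destruct (Nat.eq_dec j n) as [->|]; [apply HN2; lia|apply HN1; lia].
Qed.

(* Fullness of the families absorbs the finitely many times before the tuples are close. *)
Lemma scrambled_asymptotic F G n dl r (a z : nat -> X) : full_family F -> full_family G ->
  scrambled d f F G n dl a -> r < dl -> (forall j, (j < n)%nat -> asymptotic (z j) (a j)) ->
  scrambled d f F G n r z.
Proof.
  intros [[_ [_ SF]] FF] [[_ [_ SG]] FG] [Sa Ta] Hr Has. split.
  - destruct (asymptotic_uniform z a n Has ((dl - r)/2) ltac:(lra)) as [N HN].
    apply (SF _ _ (FF _ N Sa)). intros i [Hi Ni] j k Hjk Hk.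
    specialize (Hi j k Hjk Hk). pose proof (HN j i ltac:(lia) Ni). pose proof (HN k i ltac:(lia) Ni).
    pose proof (dist_triangle (iter f i (a j)) (iter f i (z j)) (iter f i (a k))).
    pose proof (dist_triangle (iter f i (z j)) (iter f i (z k)) (iter f i (a k))).
    pose proof (dist_sym (iter f i (a j)) (iter f i (z j))). unfold Rgt in *. lra.
  - intros e He. destruct (asymptotic_uniform z a n Has (e/4) ltac:(lra)) as [N HN].
    apply (SG _ _ (FG _ N (Ta (e/2) ltac:(lra)))). intros i [Hi Ni] j k Hjk Hk.
    specialize (Hi j k Hjk Hk). pose proof (HN j i ltac:(lia) Ni). pose proof (HN k i ltac:(lia) Ni).
    pose proof (dist_triangle (iter f i (z j)) (iter f i (a j)) (iter f i (z k))).
    pose proof (dist_triangle (iter f i (a j)) (iter f i (a k)) (iter f i (z k))).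
    pose proof (dist_sym (iter f i (a k)) (iter f i (z k))). lra.
Qed.

Section Shadowing.
Hypothesis Hsh : s_limit_shadowing d f.

(* The pseudo-orbit follows [u] up to time [N], then the chain [w], then the orbit of [v]. *)
Lemma shadow_orbit_junction eps : 0 < eps -> exists dl, 0 < dl /\
  forall u v w N k, (1 <= N)%nat -> chain_in d f allX dl w k ->
    d (iter f N u) (w O) <= dl -> w k = iter f (N + k) v ->
    exists z, d z u <= eps /\ asymptotic z v.
Proof.
  intros Heps. destruct (Hsh eps Heps) as [dl [Hdl Hs]]. exists dl. split; [exact Hdl|].
  intros u v w N k HN [_ [_ Sw]] Hw0 Hwk.
  set (xs := fun i => if Nat.ltb i N then iter f i u
                      else if Nat.leb i (N + k) then w (i - N)%nat else iter f i v).
  assert (Htail : forall i, (N + k <= i)%nat -> xs i = iter f i v).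
  { intros i Hi. unfold xs. destruct (Nat.ltb_spec i N); [lia|].
    destruct (Nat.leb_spec i (N + k)); [|reflexivity].
    replace i with (N + k)%nat by lia. rewrite <- Hwk. f_equal. lia. }
  destruct (Hs xs) as [z [Hz0 Hz]].
  - intros i. destruct (le_lt_dec (N + k) i).
    { rewrite !Htail by lia. rewrite iter_succ, dist_refl. lra. }
    unfold xs. destruct (Nat.ltb_spec i N), (Nat.ltb_spec (S i) N); try lia.
    + rewrite iter_succ, dist_refl. lra.
    + destruct (Nat.leb_spec (S i) (N + k)); [|lia].
      replace (S i - N)%nat with 0%nat by lia. replace N with (S i) in Hw0 by lia. exact Hw0.
    + destruct (Nat.leb_spec i (N + k)), (Nat.leb_spec (S i) (N + k)); try lia.
      replace (S i - N)%nat with (S (i - N)) by lia. apply Sw. lia.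
  - intros e He. exists (N + k)%nat. intros i Hi.
    rewrite !Htail by lia. rewrite iter_succ, dist_refl. exact He.
  - exists z. split.
    + specialize (Hz0 0%nat). unfold xs in Hz0. destruct (Nat.ltb_spec 0 N); [exact Hz0|lia].
    + intros eta Heta. destruct (Hz eta Heta) as [N' HN']. exists (Nat.max N' (N + k)).
      intros i Hi. rewrite <- Htail by lia. apply HN'. lia.
Qed.

End Shadowing.

Section CompactContinuous.
Hypothesis Hcomp : compact_space d.
Hypothesis Hcont : continuous_map d f.

Lemma open_ball_and (P : Prop) c r : Defs.open_set d (fun y => P /\ d c y < r).
Proof.
  intros y [HP Hy]. exists (r - d c y). split; [lra|].
  intros z Hz. split; [exact HP|]. pose proof (dist_triangle c y z). lra.
Qed.

Lemma compact_uniform_index (Q : nat -> X -> Prop) :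
  (forall K K' z, Q K z -> (K <= K')%nat -> Q K' z) ->
  (forall y, exists rho K, 0 < rho /\ forall z, d y z < rho -> Q K z) ->
  exists K, forall z, Q K z.
Proof.
  intros Hmono Hloc.
  destruct (Hcomp (X * R * nat)%type
    (fun i z => (0 < snd (fst i) /\
                 forall z', d (fst (fst i)) z' < snd (fst i) -> Q (snd i) z')
                /\ d (fst (fst i)) z < snd (fst i))) as [l Hl].
  - intros [[y rho] K]. apply open_ball_and.
  - intros z. destruct (Hloc z) as [rho [K [Hrho HQ]]].
    exists (z, rho, K). simpl. rewrite dist_refl. auto.
  - exists (list_max (map snd l)). intros z.
    destruct (Hl z) as [[[y rho] K] [Hin [[_ HQ] Hz]]]. simpl in *.
    apply (Hmono K); [exact (HQ z Hz)|].
    pose proof (proj1 (list_max_le (map snd l) _) (le_n _)) as Hmax.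
    rewrite Forall_forall in Hmax. apply Hmax.
    exact (in_map snd l (y, rho, K) Hin).
Qed.

Lemma cluster_point (w : nat -> X) :
  exists c, forall r, 0 < r -> forall K, exists k, (K <= k)%nat /\ d (w k) c < r.
Proof.
  apply NNPP. intros Hno.
  destruct (compact_uniform_index (fun K z => forall k, (K <= k)%nat -> w k <> z)) as [K HK].
  - intros K K' z Hz HKK' k Hk. apply Hz. lia.
  - intros y. apply NNPP. intros Hy. apply Hno. exists y. intros r Hr K.
    apply NNPP. intros Hk. apply Hy. exists r, K. split; [exact Hr|].
    intros z Hz k HKk Ewk. apply Hk. exists k. split; [exact HKk|].
    rewrite Ewk, dist_sym. exact Hz.
  - exact (HK (w K) K (le_n K) eq_refl).
Qed.

(* Going around a loop through [b] first gives a chain of length at least 2,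
   whose first jump can be replaced by a jump from [f a] thanks to continuity. *)
Lemma chain_rel_f_l a b : chain_rel d f a b -> chain_rel d f b b -> chain_rel d f (f a) b.
Proof.
  rewrite !chain_rel_iff. intros Hab Hbb e He.
  destruct (Hcont (f a) (e/2)) as [r [Hr Hcr]]; [lra|].
  set (e' := Rmin (e/2) (r/2)).
  assert (He' : 0 < e') by (apply Rmin_pos; lra).
  assert (He1 : e' <= e/2) by apply Rmin_l. assert (He2 : e' <= r/2) by apply Rmin_r.
  destruct (Hab e' He') as [k Hk], (Hbb e' He') as [l Hl].
  pose proof (chain_from_to_len _ _ _ _ _ Hk). pose proof (chain_from_to_len _ _ _ _ _ Hl).
  destruct (chain_from_to_trans _ _ _ _ _ _ _ Hk Hl) as [z [Hz [Z0 Zkl]]].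
  exists (k + l - 1)%nat. apply (chain_from_to_mono allX allX (e' + e/2)); [auto|lra|].
  apply (chain_from_to_move_start _ _ _ (z 1%nat)); [|exact I|].
  - rewrite <- Zkl. apply chain_in_suffix; [exact Hz|lia].
  - apply Rlt_le, Hcr. destruct Hz as [_ [_ Sz]]. specialize (Sz 0%nat ltac:(lia)).
    rewrite Z0 in Sz. lra.
Qed.

Section Component.
Variables (C : X -> Prop) (x0 : X).
Hypothesis HC : forall y, C y <-> chain_equiv d f x0 y.

Lemma component_chain_rel x y : C x -> C y -> chain_rel d f x y.
Proof.
  intros Hx Hy. apply HC in Hx as [_ [_ [_ Hx0]]]. apply HC in Hy as [_ [_ [Hy0 _]]].
  exact (chain_rel_trans _ _ _ Hx0 Hy0).
Qed.

Lemma component_of_chain_rel x w : C x -> chain_rel d f x w -> chain_rel d f w x -> C w.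
Proof.
  intros Hx Hxw Hwx. apply HC in Hx as [CR0 [_ [H0x Hx0]]]. apply HC.
  split; [exact CR0|split; [|split]].
  - exact (chain_rel_trans _ _ _ Hwx Hxw).
  - exact (chain_rel_trans _ _ _ H0x Hxw).
  - exact (chain_rel_trans _ _ _ Hwx Hx0).
Qed.

Lemma component_iter i x : C x -> C (iter f i x).
Proof.
  intros Hx. induction i as [|i IH]; [exact Hx|]. rewrite iter_succ.
  apply (component_of_chain_rel _ _ IH (chain_rel_f _)).
  apply chain_rel_f_l; apply component_chain_rel; exact IH.
Qed.

(* The cluster point of a sequence of counterexamples lies on arbitrarily fine loops
   through [x], hence in [C]. *)
Lemma chain_loop_near_component x dl : C x -> 0 < dl ->
  exists eps, 0 < eps /\ forall w k l,
    chain_from_to allX eps x w k -> chain_from_to allX eps w x l ->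
    exists c, C c /\ d c w < dl /\ d (f c) (f w) < dl.
Proof.
  intros Cx Hdl. apply NNPP. intros Hno.
  assert (Hw : forall j : nat, exists w,
    (exists k, chain_from_to allX (/ INR (S j)) x w k) /\
    (exists l, chain_from_to allX (/ INR (S j)) w x l) /\
    ~ exists c, C c /\ d c w < dl /\ d (f c) (f w) < dl).
  { intros j. apply NNPP. intros Hj. apply Hno. exists (/ INR (S j)).
    split; [apply Rinv_0_lt_compat, lt_0_INR; lia|].
    intros w k l H1 H2. apply NNPP. intros H3. apply Hj. exists w. eauto. }
  destruct (functional_choice _ Hw) as [w Hw'].
  destruct (cluster_point w) as [c Hc].
  assert (Hsmall : forall e, 0 < e -> exists K, forall j, (K <= j)%nat -> / INR (S j) < e).
  { intros e He. destruct (archimed_cor1 e He) as [K [HK HK0]]. exists K. intros j Hj.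
    eapply Rle_lt_trans; [|exact HK].
    apply Rinv_le_contravar; [apply lt_0_INR; lia|apply le_INR; lia]. }
  assert (Hxc : chain_rel d f x c).
  { apply chain_rel_iff. intros e He. destruct (Hsmall (e/2)) as [K HK]; [lra|].
    destruct (Hc (e/2) ltac:(lra) K) as [j [Hj Hdj]]. destruct (Hw' j) as [[k Hk] _].
    specialize (HK j Hj). exists k.
    apply (chain_from_to_mono allX allX (/ INR (S j) + e/2)); [auto|lra|].
    apply (chain_from_to_move_end _ _ _ _ (w j)); [exact Hk|exact I|lra]. }
  assert (Hcx : chain_rel d f c x).
  { apply chain_rel_iff. intros e He. destruct (Hcont c (e/2)) as [rho [Hrho Hcr]]; [lra|].
    destruct (Hsmall (e/2)) as [K HK]; [lra|].
    destruct (Hc rho Hrho K) as [j [Hj Hdj]]. destruct (Hw' j) as [_ [[l Hl] _]].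
    specialize (HK j Hj). exists l.
    apply (chain_from_to_mono allX allX (/ INR (S j) + e/2)); [auto|lra|].
    apply (chain_from_to_move_start _ _ _ (w j)); [exact Hl|exact I|].
    apply Rlt_le, Hcr. rewrite dist_sym. exact Hdj. }
  destruct (Hcont c dl Hdl) as [rho [Hrho Hcr]].
  destruct (Hc (Rmin rho dl) (Rmin_pos _ _ Hrho Hdl) 0%nat) as [j [_ Hdj]].
  destruct (Hw' j) as [_ [_ Hfar]]. apply Hfar. exists c. rewrite dist_sym in Hdj.
  pose proof (Rmin_l rho dl). pose proof (Rmin_r rho dl).
  split; [exact (component_of_chain_rel x c Cx Hxc Hcx)|split; [lra|apply Hcr; lra]].
Qed.

(* Every point of a fine chain from [x] to [y] lies on a fine loop through [x],
   so it can be moved into [C] at a small cost. *)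
Lemma component_chain_transitive x y dl : C x -> C y -> 0 < dl ->
  exists k, chain_from_to C dl x y k.
Proof.
  intros Cx Cy Hdl.
  destruct (chain_loop_near_component x (dl/4) Cx ltac:(lra)) as [eps [Heps Hnear]].
  set (e := Rmin eps (dl/4)).
  assert (He : 0 < e) by (apply Rmin_pos; lra).
  assert (He1 : e <= eps) by apply Rmin_l. assert (He2 : e <= dl/4) by apply Rmin_r.
  destruct (proj1 (chain_rel_iff x y) (component_chain_rel x y Cx Cy) e He)
    as [k [z [Hz [Z0 Zk]]]].
  destruct (proj1 (chain_rel_iff y x) (component_chain_rel y x Cy Cx) eps Heps) as [l Hyx].
  pose proof (proj1 Hz) as Hk.
  assert (Hc : forall i, exists c, (i <= k)%nat ->
    (C c /\ d c (z i) <= dl/4 /\ d (f c) (f (z i)) <= dl/4) /\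
    (i = O -> c = x) /\ (i = k -> c = y)).
  { intros i. destruct (Nat.eq_dec i 0) as [->|Hi0].
    { exists x. intros _. rewrite Z0, !dist_refl. repeat split; intros; (assumption || lra || lia). }
    destruct (Nat.eq_dec i k) as [->|Hik].
    { exists y. intros _. rewrite Zk, !dist_refl. repeat split; intros; (assumption || lra || lia). }
    destruct (le_lt_dec i k) as [Hle|]; [|exists x; lia].
    destruct (Hnear (z i) i (k - i + l)%nat) as [c [Cc [H1 H2]]].
    - rewrite <- Z0. apply (chain_from_to_mono allX allX e); [auto|exact He1|].
      apply (chain_in_prefix _ _ _ k); [exact Hz|lia].
    - apply (chain_from_to_trans _ _ _ y); [|exact Hyx].
      rewrite <- Zk. apply (chain_from_to_mono allX allX e); [auto|exact He1|].
      apply chain_in_suffix; [exact Hz|lia].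
    - exists c. intros _. repeat split; intros; (assumption || lra || lia). }
  destruct (functional_choice _ Hc) as [z' Hz'].
  exists k. apply (chain_from_to_mono C C (e + 2 * (dl/4))); [auto|lra|].
  exists z'. split; [|split].
  - apply (chain_in_perturb allX C e (dl/4) z); [exact Hz|]. intros i Hi. apply Hz', Hi.
  - apply (Hz' 0%nat); lia.
  - apply (Hz' k); lia.
Qed.

Lemma component_bounded_chain_length p dl : C p -> 0 < dl ->
  exists L, forall u, C u ->
    (exists k, (k <= L)%nat /\ chain_from_to C dl p u k) /\
    (exists k, (k <= L)%nat /\ chain_from_to C dl u p k).
Proof.
  intros Cp Hdl. apply compact_uniform_index.
  - intros L L' u H HL Cu. destruct (H Cu) as [[k [Hk H1]] [k' [Hk' H2]]].
    split; [exists k|exists k']; split; (assumption || lia).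
  - intros y. destruct (Hcont y (dl/3)) as [r [Hr Hry]]; [lra|].
    set (rho := Rmin r (dl/3)).
    assert (Hrho : 0 < rho) by (apply Rmin_pos; lra).
    assert (Hrho1 : rho <= r) by apply Rmin_l. assert (Hrho2 : rho <= dl/3) by apply Rmin_r.
    destruct (classic (exists c, C c /\ d y c < rho)) as [[c [Cc Hc]]|Hno].
    + destruct (component_chain_transitive p c (dl/3) Cp Cc) as [k1 H1]; [lra|].
      destruct (component_chain_transitive c p (dl/3) Cc Cp) as [k2 H2]; [lra|].
      exists rho, (Nat.max k1 k2). split; [exact Hrho|]. intros u Hu Cu. split.
      * exists k1. split; [lia|].
        apply (chain_from_to_mono C C (dl/3 + 2 * (dl/3))); [auto|lra|].
        apply (chain_from_to_move_end _ _ _ _ c); [exact H1|exact Cu|].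
        pose proof (dist_triangle c y u). rewrite (dist_sym c y) in *. lra.
      * exists k2. split; [lia|].
        apply (chain_from_to_mono C C (dl/3 + 2 * (dl/3))); [auto|lra|].
        apply (chain_from_to_move_start _ _ _ c); [exact H2|exact Cu|].
        pose proof (Hry u ltac:(lra)). pose proof (Hry c ltac:(lra)).
        pose proof (dist_triangle (f u) (f y) (f c)). rewrite (dist_sym (f u) (f y)) in *. lra.
    + exists rho, 0%nat. split; [exact Hrho|]. intros u Hu Cu. exfalso. eauto.
Qed.

Lemma cycle_length_divisible dl m q k : is_gcd_set (cycle_length d f C dl) m ->
  chain_from_to C dl q q k -> Nat.divide m k.
Proof.
  intros Hgcd [z [Hz [Z0 Zk]]]. apply Hgcd. exists z. split; [exact Hz|congruence].
Qed.

Section CyclesAtPoint.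
Variables (p : X) (dl : R) (m : nat).
Hypothesis Cp : C p.
Hypothesis Hdl : 0 < dl.
Hypothesis Hgcd : is_gcd_set (cycle_length d f C dl) m.

(* A cycle of length [k] anywhere in [C] yields cycles at [p] of lengths [a + b] and [a + k + b]. *)
Lemma is_gcd_set_cycles_at : is_gcd_set (chain_from_to C dl p p) m.
Proof.
  split; [intros k; apply cycle_length_divisible, Hgcd|].
  intros g Hg. apply Hgcd. intros k [x [Hx Ex]].
  assert (Cx : C (x O)) by (apply (proj1 (proj2 Hx)); lia).
  assert (Hxx : chain_from_to C dl (x O) (x O) k).
  { exists x. split; [exact Hx|split; [reflexivity|symmetry; exact Ex]]. }
  destruct (component_chain_transitive p (x O) dl Cp Cx Hdl) as [a Ha].
  destruct (component_chain_transitive (x O) p dl Cx Cp Hdl) as [b Hb].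
  apply (Nat.divide_add_cancel_r _ (a + b)).
  - apply Hg. exact (chain_from_to_trans _ _ _ _ _ _ _ Ha Hb).
  - replace (a + b + k)%nat with (a + (k + b))%nat by lia. apply Hg.
    apply (chain_from_to_trans _ _ _ _ _ _ _ Ha).
    exact (chain_from_to_trans _ _ _ _ _ _ _ Hxx Hb).
Qed.

(* Go from [q] to [p] and from [p] to [q'] in boundedly many steps, and fill the
   remaining time, a multiple of [m], with a cycle at [p]. *)
Lemma chain_of_exact_length : exists K, forall q q' len a b, C q -> C q' -> (K <= len)%nat ->
  chain_from_to C dl p q a -> chain_from_to C dl q' p b -> Nat.divide m (a + len + b) ->
  chain_from_to C dl q q' len.
Proof.
  destruct (component_bounded_chain_length p dl Cp Hdl) as [L HL].
  destruct (additive_set_contains_large_multiples (chain_from_to C dl p p)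
    (fun a b => chain_from_to_trans C dl p p p a b) (fun k => chain_from_to_len C dl p p k)
    m is_gcd_set_cycles_at) as [T HT].
  { destruct (component_chain_transitive p p dl Cp Cp Hdl) as [s Hs]. exists s. exact Hs. }
  exists (T + L + L)%nat. intros q q' len a b Cq Cq' Hlen Ha Hb Hdiv.
  destruct (HL q Cq) as [_ [l1 [Hl1 H1]]]. destruct (HL q' Cq') as [[l2 [Hl2 H2]] _].
  assert (D1 : Nat.divide m (a + l1)).
  { apply (cycle_length_divisible dl m p); [exact Hgcd|].
    exact (chain_from_to_trans _ _ _ _ _ _ _ Ha H1). }
  assert (D2 : Nat.divide m (l2 + b)).
  { apply (cycle_length_divisible dl m p); [exact Hgcd|].
    exact (chain_from_to_trans _ _ _ _ _ _ _ H2 Hb). }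
  assert (Hpad : chain_from_to C dl p p (len - l1 - l2)).
  { apply HT; [lia|].
    apply (Nat.divide_add_cancel_r _ (l2 + b)); [exact D2|].
    apply (Nat.divide_add_cancel_r _ (a + l1)); [exact D1|].
    replace (a + l1 + (l2 + b + (len - l1 - l2)))%nat with (a + len + b)%nat by lia.
    exact Hdiv. }
  replace len with (l1 + (len - l1 - l2 + l2))%nat by lia.
  apply (chain_from_to_trans _ _ _ _ _ _ _ H1).
  exact (chain_from_to_trans _ _ _ _ _ _ _ Hpad H2).
Qed.

End CyclesAtPoint.

Section Class.
Variables (D : X -> Prop) (p : X).
Hypothesis Cp : C p.
Hypothesis HD : forall y, D y <-> C y /\ sim_C d f C p y.

Lemma D_delta_chain dl m b : 0 < dl -> is_gcd_set (cycle_length d f C dl) m ->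
  D_delta d f C D dl b -> exists k, Nat.divide m k /\ chain_from_to C dl p b k.
Proof.
  intros Hdl Hgcd [_ [x [Dx [m2 [Hgcd2 [z2 [k2 [H2 [A2 [B2 M2]]]]]]]]]].
  apply HD in Dx as [_ Hpx].
  destruct (Hpx dl Hdl) as [m1 [Hgcd1 [z1 [k1 [H1 [A1 [B1 M1]]]]]]].
  rewrite (is_gcd_set_unique _ _ _ Hgcd1 Hgcd) in M1.
  rewrite (is_gcd_set_unique _ _ _ Hgcd2 Hgcd) in M2.
  exists (k1 + k2)%nat. split; [now apply Nat.divide_add_r|].
  apply (chain_from_to_trans _ _ _ x); [exists z1|exists z2]; auto.
Qed.

Lemma D_delta_orbits_chain dl m : 0 < dl -> is_gcd_set (cycle_length d f C dl) m ->
  exists K, forall b c N M, D_delta d f C D dl b -> D_delta d f C D dl c ->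
    (1 <= N)%nat -> (K + N <= M)%nat ->
    chain_from_to C dl (iter f N b) (iter f M c) (M - N).
Proof.
  intros Hdl Hgcd. destruct (chain_of_exact_length p dl m Cp Hdl Hgcd) as [K HK].
  exists K. intros b c N M Db Dc HN HM.
  destruct (D_delta_chain dl m b Hdl Hgcd Db) as [kb [Hkb Hpb]].
  destruct (D_delta_chain dl m c Hdl Hgcd Dc) as [kc [Hkc Hpc]].
  assert (Cb : C b) by apply Db. assert (Cc : C c) by apply Dc.
  destruct (component_chain_transitive (iter f M c) p dl (component_iter M c Cc) Cp Hdl)
    as [l Hcp].
  assert (Hpc' : chain_from_to C dl p (iter f M c) (kc + M)).
  { apply (chain_from_to_trans _ _ _ c); [exact Hpc|].
    apply chain_from_to_orbit; [lia|lra|intros; apply component_iter, Cc]. }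
  assert (HMl : Nat.divide m (M + l)).
  { apply (Nat.divide_add_cancel_r _ kc); [exact Hkc|rewrite Nat.add_assoc].
    apply (cycle_length_divisible dl m p); [exact Hgcd|].
    exact (chain_from_to_trans _ _ _ _ _ _ _ Hpc' Hcp). }
  apply (HK _ _ _ (kb + N)%nat l); [apply component_iter, Cb|apply component_iter, Cc
                                    |lia| |exact Hcp|].
  - apply (chain_from_to_trans _ _ _ b); [exact Hpb|].
    apply chain_from_to_orbit; [lia|lra|intros; apply component_iter, Cb].
  - replace (kb + N + (M - N) + l)%nat with (kb + (M + l))%nat by lia.
    now apply Nat.divide_add_r.
Qed.

Hypothesis Hsh : s_limit_shadowing d f.

Lemma Vs_asymptotic_approx u v e : Vs d f C D u -> Vs d f C D v -> 0 < e ->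
  exists z, d z u < e /\ asymptotic z v.
Proof.
  intros Vu Vv He.
  destruct (shadow_orbit_junction Hsh (e/2)) as [d1 [Hd1 Hjunction]]; [lra|].
  set (dl := d1/2). assert (Hdl : 0 < dl) by (unfold dl; lra).
  destruct (proj2 (Vu dl Hdl) d1 Hd1) as [Nu HNu].
  destruct (HNu (S Nu) ltac:(lia)) as [y [[b [Db ->]] Hub]].
  pose proof Db as [_ [_ [_ [m [Hgcd _]]]]].
  destruct (D_delta_orbits_chain dl m Hdl Hgcd) as [K HK].
  destruct (proj2 (Vv dl Hdl) dl Hdl) as [Nv HNv].
  set (M := (S Nu + K + Nv)%nat).
  destruct (HNv M ltac:(unfold M; lia)) as [y' [[c [Dc ->]] Hvc]].
  assert (Hpath := HK b c (S Nu) M Db Dc ltac:(lia) ltac:(unfold M; lia)).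
  destruct (chain_from_to_move_end allX dl dl _ _ (iter f M v) _
              (chain_from_to_mono C allX dl dl _ _ _ (fun _ _ => I) (Rle_refl _) Hpath) I)
    as [w [Hw [W0 WM]]].
  { rewrite dist_sym. lra. }
  destruct (Hjunction u v w (S Nu) (M - S Nu)%nat) as [z [Hzu Hzv]].
  - lia.
  - replace d1 with (dl + dl) by (unfold dl; lra). exact Hw.
  - rewrite W0. lra.
  - rewrite WM. f_equal. unfold M; lia.
  - exists z. split; [lra|exact Hzv].
Qed.

End Class.
End Component.
End CompactContinuous.
End Dynamics.

Theorem theorem1p2 (X : Type) (d : X -> X -> R) (f : X -> X)
  (Hmetric : is_metric d) (Hcompact : compact_space d)
  (Hcont : continuous_map d f) (Hshadow : s_limit_shadowing d f)
  (C D : X -> Prop) (HC : chain_component d f C) (HD : D_class d f C D)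
  (F G : (nat -> Prop) -> Prop) (HF : full_family F) (HG : full_family G)
  (n : nat) (delta : R) (Hn : (2 <= n)%nat) (Hdelta : 0 < delta) :
  (exists a : nat -> X, (forall j, (j < n)%nat -> Vs d f C D (a j)) /\
     scrambled d f F G n delta a) ->
  forall r, 0 < r -> r < delta -> dense_chaotic d f F G n r (Vs d f C D).
Proof.
  intros [a [Va Sa]] r Hr Hrd.
  destruct HC as [x0 [_ HCx]]. destruct HD as [p [Cp HDp]].
  split; [exists (a O); apply Va; lia|].
  intros y e Hy He.
  assert (Hz : forall j, exists z, (j < n)%nat -> d z (y j) < e /\ asymptotic d f z (a j)).
  { intros j. destruct (lt_dec j n) as [Hj|Hj]; [|exists (y j); lia].
    destruct (Vs_asymptotic_approx d f Hmetric Hcompact Hcont C x0 HCx D p Cp HDp Hshadow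
                (y j) (a j) e (Hy j Hj) (Va j Hj) He) as [z Hz].
    exists z. intros _. exact Hz. }
  destruct (functional_choice _ Hz) as [z Hz'].
  exists z. split; [|split].
  - intros j Hj. apply (Vs_asymptotic d f Hmetric C D (a j)); [apply Va, Hj|apply Hz', Hj].
  - apply (scrambled_asymptotic d f Hmetric F G n delta r a z HF HG Sa Hrd).
    intros j Hj. apply Hz', Hj.
  - intros j Hj. apply Hz', Hj.
Qed.
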